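(* Let $d,k$ be positive integers and $z_1,\dots,z_d$ integers. For $1\le i\le d$ let $A_i=\{z_i+1,\dots,z_i+k\}$ and $B_i=\{z_i+1,\dots,z_i+k-1\}$ (with $B_i=\varnothing$ if $k=1$). Let $U\subseteq\mathbb{R}^d$ satisfy: (1) $U$ is non-empty; (2) $U$ is convex; (3) for each $1\le i\le d$, $\pi_i(U)=\pi_i(H^i_{z_i+1}\cap U)$, where $\pi_i:\mathbb{R}^d\to\mathbb{R}^{d-1}$ deletes the $i$-th coordinate and $H^i_x\subseteq\mathbb{R}^d$ is the hyperplane $\{x_i=x\}$. Then $$(k-1)^d\Big|U\cap\prod_{i=1}^d A_i\Big|\le k^d\Big|U\cap\prod_{i=1}^d B_i\Big|.$$ *)

From HB Require Import structures.
From mathcomp Require Import all_boot all_order all_algebra.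
From mathcomp Require Import boolp classical_sets reals.
Set Implicit Arguments. Unset Strict Implicit. Unset Printing Implicit Defensive.
Import Order.TTheory GRing.Theory Num.Theory.
Local Open Scope ring_scope.
Local Open Scope classical_set_scope.

(* Points of R^d are row vectors 'rV[R]_d; coordinate i of x is x 0 i. *)

Definition convex_rv (R : realType) (d : nat) (U : set 'rV[R]_d) : Prop :=
  forall x y : 'rV[R]_d, U x -> U y ->
    forall t : R, 0 <= t -> t <= 1 -> U (t *: x + (1 - t) *: y).

Definition proj_del (R : realType) (d : nat) (i : 'I_d) (x : 'rV[R]_d)
  : 'rV[R]_d.-1 := \row_(j < d.-1) x 0 (lift i j).

Definition hyperplane (R : realType) (d : nat) (i : 'I_d) (c : R)
  : set 'rV[R]_d := [set x | x 0 i = c].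

(* The integer point (z_i + 1 + t_i)_i, for an offset vector t.  As t ranges
   over {ffun 'I_d -> 'I_m}, this enumerates bijectively the integer box
   prod_i {z_i+1, ..., z_i+m}. *)
Definition box_pt (R : realType) (d m : nat) (z : 'I_d -> int)
  (t : {ffun 'I_d -> 'I_m}) : 'rV[R]_d :=
  \row_(i < d) ((z i + 1 + (t i : nat)%:Z)%:~R).

Definition box_count (R : realType) (d m : nat) (z : 'I_d -> int)
  (U : set 'rV[R]_d) : nat :=
  #|[set t : {ffun 'I_d -> 'I_m} | `[< U (box_pt R z t) >] ]|.

From HB Require Import structures.
From mathcomp Require Import all_boot all_order all_algebra.
From mathcomp Require Import boolp classical_sets reals.
From mathcomp Require Import ring zify.
Set Implicit Arguments. Unset Strict Implicit. Unset Printing Implicit Defensive.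
Import Order.TTheory GRing.Theory Num.Theory.
Local Open Scope ring_scope.
Local Open Scope classical_set_scope.

(* Condition (3) together with convexity makes U closed under moving any
   coordinate x_i down towards z_i + 1: the point of U on the hyperplane
   x_i = z_i + 1 with the same other coordinates, combined convexly with x,
   realises every intermediate value.  Doing this coordinate by coordinate,
   every lattice point of the box with offsets t' <= t (componentwise) lies in
   U as soon as the point with offsets t does.  The theorem then follows by
   counting: (x, a) |-> if x < k-1 then (x, a) else (a, k-1) injects
   {0..k-1} x {0..k-2} into {0..k-2} x {0..k-1} without increasing the first
   component, and its d-fold product sends (offsets in U of the k-box) x
   (k-1)^d into (offsets in U of the (k-1)-box) x k^d. *)

Lemma proj_del_coord (R : realType) (d : nat) (i j : 'I_d) (x y : 'rV[R]_d) :
  proj_del i x = proj_del i y -> j != i -> x 0 j = y 0 j.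
Proof.
move=> pxy; rewrite eq_sym => /unlift_some[j' -> _].
by have := congr1 (fun v : 'rV[R]_d.-1 => v 0 j') pxy; rewrite !mxE.
Qed.

Section ProjectionClosed.

Variables (R : realType) (d : nat) (U : set 'rV[R]_d).
Hypothesis convU : convex_rv U.

Lemma convex_proj_hyperplane_lower (i : 'I_d) (b : R) :
  proj_del i @` U = proj_del i @` (hyperplane i b `&` U) ->
  forall (x : 'rV[R]_d) (c : R), U x -> b <= c <= x 0 i ->
  U (\row_j (if j == i then c else x 0 j)).
Proof.
move=> projU x c Ux /andP[bc cx].
have : (proj_del i @` U) (proj_del i x) by exists x.
rewrite projU => -[y [/= yi Uy] pyx].
have [xb | xb] := eqVneq (x 0 i) b.
  move: Ux; congr U; apply/rowP => j; rewrite mxE.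
  by case: eqP => // ->; apply/le_anti; rewrite cx xb bc.
have xb_gt0 : 0 < x 0 i - b by rewrite subr_gt0 lt_def xb (le_trans bc cx).
pose t := (c - b) / (x 0 i - b).
have t_ge0 : 0 <= t by apply: divr_ge0; [rewrite subr_ge0 | exact: ltW].
have t_le1 : t <= 1 by rewrite ler_pdivrMr // mul1r lerD2r.
have := convU Ux Uy t_ge0 t_le1; congr U; apply/rowP => j; rewrite !mxE.
case: eqP => [-> | /eqP ji].
  by rewrite yi /t; field; rewrite gt_eqF.
by rewrite (proj_del_coord pyx ji); ring.
Qed.

Lemma convex_proj_hyperplanes_lower (b : 'I_d -> R) :
  (forall i, proj_del i @` U = proj_del i @` (hyperplane i (b i) `&` U)) ->
  forall x y : 'rV[R]_d, U x -> (forall i, b i <= y 0 i <= x 0 i) -> U y.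
Proof.
move=> projU x y Ux bxy.
pose w n := \row_(j < d) (if (j < n)%N then y 0 j else x 0 j).
have Uw n : U (w n).
  elim: n => [|n IHn]; first by move: Ux; congr U; apply/rowP => j; rewrite mxE.
  have [nd | dn] := ltnP n d; last first.
    move: IHn; congr U; apply/rowP => j; rewrite !mxE.
    by rewrite !(leq_trans (ltn_ord j)) // ltnW.
  pose i := Ordinal nd.
  have wni : w n 0 i = x 0 i by rewrite mxE ltnn.
  have := convex_proj_hyperplane_lower (projU i) IHn.
  rewrite wni => /(_ _ (bxy i)); congr U; apply/rowP => j; rewrite !mxE ltnS.
  have [-> | ji] := eqVneq j i; first by rewrite leqnn.
  have jn : (val j == n) = false := negbTE ji.
  by rewrite [in RHS]leq_eqVlt jn.
by move: (Uw d); congr U; apply/rowP => j; rewrite mxE ltn_ord.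
Qed.

End ProjectionClosed.

Definition lower_pair (n : nat) (x : 'I_n.+1) (a : 'I_n) : 'I_n * 'I_n.+1 :=
  if insub (val x) is Some y then (y, widen_ord (leqnSn n) a) else (a, ord_max).

Lemma lower_pair_inj (n : nat) (x x' : 'I_n.+1) (a a' : 'I_n) :
  lower_pair x a = lower_pair x' a' -> x = x' /\ a = a'.
Proof.
rewrite /lower_pair.
case: insubP => [y _ yx | xn]; case: insubP => [y' _ yx' | xn'] /=.
- case=> e1 e2; split; apply/val_inj; first by rewrite -yx -yx' e1.
  exact: e2.
- by case=> _ e; move: (ltn_ord a); rewrite e ltnn.
- by case=> _ e; move: (ltn_ord a'); rewrite -e ltnn.
case=> e; split=> //; apply/val_inj; move: xn xn' (ltn_ord x) (ltn_ord x').
by rewrite -!leqNgt /=; lia.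
Qed.

Lemma lower_pair_le (n : nat) (x : 'I_n.+1) (a : 'I_n) :
  ((lower_pair x a).1 <= x)%N.
Proof.
rewrite /lower_pair; case: insubP => [y _ -> // | xn] /=.
by rewrite -leqNgt in xn; exact: leq_trans (ltnW (ltn_ord a)) xn.
Qed.

Lemma card_lower_closed_le (I : finType) (n : nat)
    (A : {set {ffun I -> 'I_n.+1}}) (B : {set {ffun I -> 'I_n}}) :
  (forall (t : {ffun I -> 'I_n.+1}) (t' : {ffun I -> 'I_n}),
     t \in A -> (forall i, (t' i <= t i)%N) -> t' \in B) ->
  (#|A| * n ^ #|I| <= #|B| * n.+1 ^ #|I|)%N.
Proof.
move=> lowerAB.
pose F (p : {ffun I -> 'I_n.+1} * {ffun I -> 'I_n}) :=
  ([ffun i => (lower_pair (p.1 i) (p.2 i)).1],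
   [ffun i => (lower_pair (p.1 i) (p.2 i)).2]).
have F_inj : injective F.
  move=> [t a] [t' a'] [/ffunP e1 /ffunP e2].
  have e i : t i = t' i /\ a i = a' i.
    apply: lower_pair_inj; move: (e1 i) (e2 i); rewrite !ffunE /=.
    by case: (lower_pair _ _) => ? ?; case: (lower_pair _ _) => ? ? /= -> ->.
  by congr pair; apply/ffunP => i; case: (e i).
have sub_im : (F @: finset.setX A [set: _] \subset finset.setX B [set: _])%SET.
  apply/fintype.subsetP => _ /imsetP[[t a] /finset.setXP[tA _] ->].
  rewrite !inE andbT; apply: lowerAB tA _ => i.
  by rewrite ffunE lower_pair_le.
move: (subset_leq_card sub_im).
by rewrite card_imset // !cardsX !cardsT !card_ffun !card_ord.
Qed.

Lemma box_countE (R : realType) (d m : nat) (z : 'I_d -> int)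
    (U : set 'rV[R]_d) :
  box_count m z U = #|[set t : {ffun 'I_d -> 'I_m} | `[< U (box_pt R z t) >]]%SET|.
Proof.
by apply: eq_card => t; rewrite [in RHS]inE; apply/idP/idP => [/set_mem|/mem_set].
Qed.

Theorem lemma2p4 (R : realType) (d k : nat) (hd : (0 < d)%N) (hk : (0 < k)%N)
  (z : 'I_d -> int) (U : set 'rV[R]_d)
  (hne : U !=set0)
  (hconv : convex_rv U)
  (hproj : forall i : 'I_d,
     proj_del i @` U = proj_del i @` (hyperplane i ((z i + 1)%:~R) `&` U)) :
  ((k.-1) ^ d * box_count k z U <= k ^ d * box_count k.-1 z U)%N.
Proof.
case: k hk => // n _ /=; rewrite !box_countE mulnC [(_ * #|_|)%N]mulnC.
have := @card_lower_closed_le 'I_d n; rewrite card_ord; apply.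
move=> t t'; rewrite !inE => Ut t'_le_t.
apply: (convex_proj_hyperplanes_lower hconv hproj Ut) => i.
by rewrite !mxE !ler_int lerDl lerD2l /= lez_nat; apply: t'_le_t.
Qed.
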